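(* Let $p$ be an odd prime with $p\equiv 1\pmod 4$, and let $B$ be a perfect $B[-1,3](p)$ set. If $i\in B$, then $6i\in B$ or $-6i\in B$ (computed modulo $p$).
   Context: A set $B\subseteq\mathbb{Z}_p$ is a perfect $B[-1,3](p)$ set if every nonzero element of $\mathbb{Z}_p$ has a unique representation $ab \bmod p$ with $a\in\{-1,1,2,3\}$ and $b\in B$ (and $0$ has no such representation); equivalently $B\subseteq\mathbb{Z}_p^\ast$, $|B|=(p-1)/4$, and the sets $\{-b,b,2b,3b\}$, $b\in B$, partition $\mathbb{Z}_p^\ast=\mathbb{Z}_p\setminus\{0\}$. *)

From HB Require Import structures.
From mathcomp Require Import all_boot all_order all_algebra.
Set Implicit Arguments. Unset Strict Implicit. Unset Printing Implicit Defensive.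
Import GRing.Theory.
Local Open Scope ring_scope.

Definition mults (p : nat) : {set 'F_p} := [set -1; 1; 2%:R; 3%:R].

Definition nreps (p : nat) (B : {set 'F_p}) (x : 'F_p) : nat :=
  #|[set ab : 'F_p * 'F_p | [&& ab.1 \in mults p, ab.2 \in B & ab.1 * ab.2 == x]]|.

Definition perfect_Bm13 (p : nat) (B : {set 'F_p}) : Prop :=
  (forall x : 'F_p, x != 0 -> nreps B x = 1%N) /\ nreps B 0 = 0%N.

From HB Require Import structures.
From mathcomp Require Import all_boot all_order all_algebra.
From mathcomp Require Import zify.
Set Implicit Arguments. Unset Strict Implicit. Unset Printing Implicit Defensive.
Import GRing.Theory.
Local Open Scope ring_scope.

(* Since 6i is nonzero it has
   a representation 6i = a*b with a in {-1,1,2,3} and b in B.  If a = -1 or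
   a = 1 we get -6i in B or 6i in B.  The other two cases are impossible:
   a = 2 forces b = 3i, a = 3 forces b = 2i, and in a perfect set c*i cannot
   lie in B together with i for a nonzero multiplier c <> 1, because
   c*i and 1*(c*i) would be two distinct representations of c*i. *)

Lemma natr_Fp_neq (p m n : nat) : prime p -> (m < p)%N -> (n < p)%N -> m <> n ->
  (m%:R : 'F_p) != n%:R.
Proof.
move=> hp mp np mn; apply/eqP => /(congr1 val).
by rewrite /= !val_Fp_nat // !modn_small.
Qed.

Lemma prime_1mod4_ge5 (p : nat) : prime p -> (p %% 4 = 1)%N -> (5 <= p)%N.
Proof.
by case: p => [|[|[|[|[|]]]]] // hp; rewrite modn_small.
Qed.

Lemma in_mults (p : nat) (a : 'F_p) :
  (a \in mults p) = [|| a == -1, a == 1, a == 2%:R | a == 3%:R].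
Proof. by rewrite !inE !orbA. Qed.

Lemma nreps_gt1 (p : nat) (B : {set 'F_p}) (x a1 b1 a2 b2 : 'F_p) :
  a1 \in mults p -> b1 \in B -> a1 * b1 = x ->
  a2 \in mults p -> b2 \in B -> a2 * b2 = x -> a1 != a2 ->
  (1 < nreps B x)%N.
Proof.
move=> m1 B1 e1 m2 B2 e2 ne.
have -> : 2%N = #|[set (a1, b1); (a2, b2)]|.
  rewrite cards2; suff: (a1, b1) != (a2, b2) by move=> ->.
  by apply: contra ne => /eqP [-> _].
apply: subset_leq_card; apply/subsetP => ab /set2P [] ->;
  by rewrite inE /= ?m1 ?m2 ?B1 ?B2 ?e1 ?e2 eqxx.
Qed.

Section PerfectSet.

Variables (p : nat) (B : {set 'F_p}).
Hypothesis hB : perfect_Bm13 B.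

(* Elements of B are nonzero, since 0 = 1*0 would be a representation of 0. *)
Lemma perfect_nonzero (b : 'F_p) : b \in B -> b != 0.
Proof.
move=> Bb; apply/eqP => b0; have := proj2 hB; apply/eqP; rewrite -lt0n.
apply/card_gt0P; exists (1, b).
by rewrite !inE /= Bb b0 mulr0 eqxx !orbT.
Qed.

Lemma perfect_rep (x : 'F_p) : x != 0 ->
  exists2 a, a \in mults p & exists2 b, b \in B & a * b = x.
Proof.
move=> x0; have /eqP/cards1P [[a b] /setP E] := proj1 hB x x0.
have := E (a, b); rewrite in_set1 eqxx in_set /= => /and3P [ma Bb /eqP eab].
by exists a => //; exists b.
Qed.

(* If i lies in B and c is a nonzero multiplier other than 1, then c*i is not
   in B: otherwise c*i would have the two representations c*i and 1*(c*i). *)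
Lemma perfect_no_ratio (c i : 'F_p) : c \in mults p -> c != 0 -> c != 1 ->
  i \in B -> c * i \notin B.
Proof.
move=> mc c0 c1 Bi; apply/negP => Bci.
have m1 : (1 : 'F_p) \in mults p by rewrite in_mults eqxx orbT.
have ci0 : c * i != 0 by rewrite mulf_neq0 // perfect_nonzero.
have := nreps_gt1 mc Bi erefl m1 Bci (mul1r _) c1.
by rewrite (proj1 hB).
Qed.

End PerfectSet.

Theorem lemma4p4 (p : nat) (hp : prime p) (hodd : odd p) (hp4 : (p %% 4 = 1)%N)
  (B : {set 'F_p}) (hB : perfect_Bm13 B) (i : 'F_p) (hi : i \in B) :
  (6%:R * i \in B) \/ (- (6%:R * i) \in B).
Proof.
have p5 := prime_1mod4_ge5 hp hp4.
have n21 : (2%:R : 'F_p) != 1 by apply: (natr_Fp_neq (n := 1)) => //; lia.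
have n31 : (3%:R : 'F_p) != 1 by apply: (natr_Fp_neq (n := 1)) => //; lia.
have n20 : (2%:R : 'F_p) != 0 by apply: (natr_Fp_neq (n := 0)) => //; lia.
have n30 : (3%:R : 'F_p) != 0 by apply: (natr_Fp_neq (n := 0)) => //; lia.
have m2 : (2%:R : 'F_p) \in mults p by rewrite in_mults eqxx !orbT.
have m3 : (3%:R : 'F_p) \in mults p by rewrite in_mults eqxx !orbT.
have i0 := perfect_nonzero hB hi.
have e6 : (6%:R : 'F_p) = 2%:R * 3%:R by rewrite -natrM.
have x0 : 6%:R * i != 0 by rewrite mulf_neq0 // e6 mulf_neq0.
have [a ma [b Bb eab]] := perfect_rep hB x0.
move: ma; rewrite in_mults => /or4P [] /eqP ea; subst a.
- by right; rewrite -eab mulN1r opprK.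
- by left; rewrite -eab mul1r.
- have b3 : b = 3%:R * i by apply: (mulfI n20); rewrite eab e6 mulrA.
  by move: Bb; rewrite b3 (negPf (perfect_no_ratio hB m3 n30 n31 hi)).
- have b2 : b = 2%:R * i by apply: (mulfI n30); rewrite eab e6 mulrA (mulrC 3%:R).
  by move: Bb; rewrite b2 (negPf (perfect_no_ratio hB m2 n20 n21 hi)).
Qed.
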